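(* Let $k$ be a field, $V$ a $k$-vector space and $\varphi\in\operatorname{End}_k(V)$ a finite potent endomorphism with index $i(\varphi)=r$, and let $V=W_\varphi\oplus U_\varphi$ be the AST-decomposition of $V$ determined by $\varphi$. If $f\in\operatorname{End}_k(V)$ is an endomorphism such that $f\circ\varphi^{r}=\varphi^{r}\circ f$, then $W_\varphi$ and $U_\varphi$ are invariant under $f$.
   Context: An endomorphism $\varphi$ of a $k$-vector space $V$ is finite potent if $\varphi^n(V)$ is finite dimensional for some $n$. For such $\varphi$, the AST-decomposition is $V=U_\varphi\oplus W_\varphi$ where $U_\varphi=\{v\in V: \varphi^m(v)=0 \text{ for some } m\}$ and $W_\varphi=\{v\in V: p(\varphi)(v)=0 \text{ for some } p(x)\in k[x] \text{ coprime to } x\}$; both are $\varphi$-invariant, $\varphi|_{U_\varphi}$ is nilpotent, $W_\varphi$ is finite dimensional and $\varphi|_{W_\varphi}$ is an automorphism of $W_\varphi$. The index $i(\varphi)$ is the nilpotency order of $\varphi|_{U_\varphi}$, i.e. the smallest $r\ge 0$ with $(\varphi|_{U_\varphi})^r=0$. *)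

From HB Require Import structures.
From mathcomp Require Import all_boot all_order all_algebra.
Set Implicit Arguments. Unset Strict Implicit. Unset Printing Implicit Defensive.
Import GRing.Theory.
Local Open Scope ring_scope.

Definition in_span (k : fieldType) (V : lmodType k) (s : seq V) (v : V) : Prop :=
  exists c : 'I_(size s) -> k, v = \sum_(i < size s) c i *: s`_i.

(* phi^n(V) is finite dimensional: it is contained in the span of a finite family
   (the image of a linear map is a subspace, so this is finite dimensionality). *)
Definition finite_potent (k : fieldType) (V : lmodType k) (phi : {linear V -> V}) : Prop :=
  exists n : nat, exists s : seq V, forall v : V, in_span s (iter n phi v).

Definition poly_app (k : fieldType) (V : lmodType k) (p : {poly k}) (phi : {linear V -> V})
  (v : V) : V := \sum_(i < size p) p`_i *: iter i phi v.

Definition U_part (k : fieldType) (V : lmodType k) (phi : {linear V -> V}) (v : V) : Prop :=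
  exists m : nat, iter m phi v = 0.

Definition W_part (k : fieldType) (V : lmodType k) (phi : {linear V -> V}) (v : V) : Prop :=
  exists p : {poly k}, coprimep p 'X /\ poly_app p phi v = 0.

Definition fp_index (k : fieldType) (V : lmodType k) (phi : {linear V -> V}) (r : nat) : Prop :=
  (forall v, U_part phi v -> iter r phi v = 0) /\
  (forall r', (forall v, U_part phi v -> iter r' phi v = 0) -> (r <= r')%N).

From HB Require Import structures.
From mathcomp Require Import all_boot all_order all_algebra.
From mathcomp Require Import ring.
Set Implicit Arguments. Unset Strict Implicit. Unset Printing Implicit Defensive.
Import GRing.Theory.
Local Open Scope ring_scope.

(* If p(phi) v = 0 with p coprime to X, a Bezout identity a p + b X^r = 1 gives
   v = phi^r (b(phi) v), so W_phi lies in the image of phi^r. Conversely, finite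
   potency makes every u annihilated by some h X^m with h coprime to X; splitting
   u along a h + b X^m = 1 shows that h(phi) kills phi^r u, because the remaining
   component lies in U_phi and is therefore killed by phi^r. Hence W_phi is the
   image and U_phi the kernel of phi^r, and both are preserved by any f commuting
   with phi^r. *)

Section PolyApp.
Variables (k : fieldType) (V : lmodType k) (phi : {linear V -> V}).
Local Notation pa p := (poly_app p phi).

Lemma iter_is_linear n : linear (iter n phi).
Proof. by move=> a x y; elim: n => //= n ->; rewrite linearP. Qed.

HB.instance Definition _ n :=
  GRing.isLinear.Build k V V *:%R (iter n phi) (iter_is_linear n).

Lemma poly_app_is_linear (p : {poly k}) : linear (pa p).
Proof.
move=> a x y; rewrite /poly_app scaler_sumr -big_split /=; apply: eq_bigr => i _.
by rewrite linearP scalerDr !scalerA mulrC.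
Qed.

HB.instance Definition _ (p : {poly k}) :=
  GRing.isLinear.Build k V V *:%R (pa p) (poly_app_is_linear p).

Lemma poly_app_widen (p : {poly k}) n v : (size p <= n)%N ->
  pa p v = \sum_(i < n) p`_i *: iter i phi v.
Proof.
move=> hn; rewrite /poly_app (big_ord_widen n (fun i => p`_i *: iter i phi v) hn).
rewrite [RHS](bigID (fun i : 'I_n => (i < size p)%N)) /= [X in _ + X]big1 ?addr0 //.
by move=> i; rewrite -leqNgt => h; rewrite nth_default // scale0r.
Qed.

Lemma poly_appD (p q : {poly k}) v : pa (p + q) v = pa p v + pa q v.
Proof.
pose n := maxn (size p) (size q).
rewrite (poly_app_widen v (size_polyD p q)) (@poly_app_widen p n) ?leq_maxl //.
rewrite (@poly_app_widen q n) ?leq_maxr // -big_split; apply: eq_bigr => i _.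
by rewrite coefD scalerDl.
Qed.

Lemma poly_appC (c : k) v : pa c%:P v = c *: v.
Proof. by rewrite (@poly_app_widen _ 1) ?size_polyC ?leq_b1 // big_ord1 coefC. Qed.

Lemma poly_app1 v : pa 1 v = v.
Proof. by rewrite -polyC1 poly_appC scale1r. Qed.

Lemma poly_appCM c (p : {poly k}) v : pa (c%:P * p) v = c *: pa p v.
Proof.
rewrite (@poly_app_widen _ (size p)); last by rewrite mul_polyC size_scale_leq.
by rewrite scaler_sumr; apply: eq_bigr => i _; rewrite coefCM scalerA.
Qed.

Lemma poly_appXM (p : {poly k}) v : pa ('X * p) v = pa p (phi v).
Proof.
rewrite (@poly_app_widen _ (size p).+1); last first.
  by apply: leq_trans (size_polyMleq _ _) _; rewrite size_polyX.
rewrite big_ord_recl coefXM scale0r add0r; apply: eq_bigr => i _.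
by rewrite coefXM -iterSr.
Qed.

Lemma poly_app_comm (p : {poly k}) v : pa p (phi v) = phi (pa p v).
Proof.
rewrite /poly_app linear_sum; apply: eq_bigr => i _.
by rewrite linearZ -iterS iterSr.
Qed.

Lemma poly_appM (p q : {poly k}) v : pa (p * q) v = pa p (pa q v).
Proof.
elim/poly_ind: p v => [|p c IH] v; first by rewrite mul0r /poly_app size_poly0 !big_ord0.
rewrite mulrDl -mulrA (mulrC 'X) mulrA -(mulrC 'X) poly_appD poly_appXM IH poly_appCM.
by rewrite poly_appD poly_appC mulrC poly_appXM poly_app_comm.
Qed.

Lemma poly_appXn n v : pa 'X^n v = iter n phi v.
Proof.
elim: n v => [|n IH] v; first by rewrite expr0 poly_app1.
by rewrite exprS poly_appXM IH -iterSr.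
Qed.

End PolyApp.

Section SpanDependence.
Variables (k : fieldType) (V : lmodType k).

Lemma in_span_dependent (s : seq V) n (x : 'I_n -> V) : (size s < n)%N ->
  (forall i, in_span s (x i)) -> exists2 w : 'rV[k]_n, w != 0 & \sum_i w 0 i *: x i = 0.
Proof.
move=> ltsn /fin_all_exists[c hc].
pose M := \matrix_(i < n, j < size s) c i j.
have : kermx M != 0.
  rewrite kermx_eq0 /row_free; apply: contraTN ltsn => /eqP <-.
  by rewrite -leqNgt rank_leq_col.
case/rowV0Pn=> w /sub_kermxP wM0 w_neq0; exists w => //.
under eq_bigr => i _ do rewrite hc scaler_sumr.
rewrite exchange_big big1 //= => j _.
have -> : \sum_i w 0 i *: (c i j *: s`_j) = (w *m M) 0 j *: s`_j.
  by rewrite mxE scaler_suml; apply: eq_bigr => i _; rewrite mxE scalerA.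
by rewrite wM0 mxE scale0r.
Qed.

End SpanDependence.

Lemma poly_coprimeX_factor (k : fieldType) (g : {poly k}) : g != 0 ->
  exists (h : {poly k}) (m : nat), coprimep h 'X /\ g = h * 'X^m.
Proof.
move=> g_neq0; have [m [h]] := multiplicity_XsubC g 0.
by rewrite g_neq0 subr0 /= -coprimepX => hX ->; exists h, m.
Qed.

Section LocallyFinite.
Variables (k : fieldType) (V : lmodType k) (phi : {linear V -> V}).
Local Notation pa p := (poly_app p phi).

Lemma poly_app_rVpoly n (w : 'rV[k]_n) v :
  pa (rVpoly w) v = \sum_(i < n) w 0 i *: iter i phi v.
Proof.
rewrite (poly_app_widen _ v (size_poly _ _)).
by apply: eq_bigr => i _; rewrite coef_rVpoly_ord.
Qed.

Lemma finite_potent_annihilator : finite_potent phi ->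
  forall u, exists2 g : {poly k}, g != 0 & pa g u = 0.
Proof.
move=> [n [s hs]] u.
pose x (i : 'I_(size s).+1) := iter i phi (iter n phi u).
have x_in_span i : in_span s (x i) by rewrite /x -iterD addnC iterD.
have [w w_neq0 hw] := in_span_dependent (ltnSn _) x_in_span.
exists (rVpoly w * 'X^n).
  apply: mulf_neq0; last by rewrite monic_neq0 ?monicXn.
  by apply: contraNneq w_neq0 => w0; apply/eqP/(can_inj rVpolyK); rewrite w0 linear0.
by rewrite poly_appM poly_appXn poly_app_rVpoly.
Qed.

End LocallyFinite.

Section ASTDecomposition.
Variables (k : fieldType) (V : lmodType k) (phi : {linear V -> V}).
Local Notation pa p := (poly_app p phi).

Lemma W_part_in_iter_image r v : W_part phi v -> exists u, v = iter r phi u.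
Proof.
move=> [p [p_coprime pv0]].
have [[a b] /= hab] := Bezout_eq1_coprimepP _ _ (coprimep_expr r p_coprime).
exists (pa b v); rewrite -poly_appXn -poly_appM -{1}[v](poly_app1 phi) -hab.
by rewrite poly_appD poly_appM pv0 linear0 add0r mulrC.
Qed.

Variable r : nat.
Hypothesis index_r : forall v, U_part phi v -> iter r phi v = 0.

Lemma iter_index_W_part_annihilated u (h : {poly k}) m :
  coprimep h 'X -> pa (h * 'X^m) u = 0 -> W_part phi (iter r phi u).
Proof.
move=> h_coprime hu; exists h; split => //.
have [[a b] /= hab] := Bezout_eq1_coprimepP _ _ (coprimep_expr m h_coprime).
have hU : U_part phi (pa (a * h * h) u).
  exists m; rewrite -poly_appXn -poly_appM.
  have -> : 'X^m * (a * h * h) = a * h * (h * 'X^m) by ring.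
  by rewrite poly_appM hu linear0.
have split_hXr : h * 'X^r = 'X^r * (a * h * h) + 'X^r * b * (h * 'X^m).
  by rewrite -[LHS]mulr1 -hab; ring.
rewrite -poly_appXn -poly_appM split_hXr poly_appD (poly_appM _ ('X^r * b)) hu.
by rewrite linear0 addr0 poly_appM poly_appXn index_r.
Qed.

Lemma iter_index_W_part : finite_potent phi ->
  forall u, W_part phi (iter r phi u).
Proof.
move=> /finite_potent_annihilator ann u; have [g g_neq0 gu0] := ann u.
have [h [m [h_coprime def_g]]] := poly_coprimeX_factor g_neq0.
by apply: (iter_index_W_part_annihilated (m := m) h_coprime); rewrite -def_g.
Qed.

End ASTDecomposition.

Unset Implicit Arguments.
Theorem lemma3p2 (k : fieldType) (V : lmodType k) (phi : {linear V -> V})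
  (hphi : finite_potent phi) (r : nat) (hr : fp_index phi r)
  (f : {linear V -> V})
  (hf : forall v : V, f (iter r phi v) = iter r phi (f v)) :
  (forall v : V, W_part phi v -> W_part phi (f v)) /\
  (forall v : V, U_part phi v -> U_part phi (f v)).
Proof.
have [index_r _] := hr.
split=> v.
- move=> /(W_part_in_iter_image r) [u ->]; rewrite hf.
  exact: iter_index_W_part.
- by move=> v_U; exists r; rewrite -hf index_r // linear0.
Qed.
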